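(* Let $G=(V,E)$ be a graph with colouring $f:V\to\{B,R\}$ and let $E'$ be an optimal solution to the MIAE problem on $(G,f)$. Then for every red node $v$, exactly $\max(r(v)-b(v),0)$ edges of $E'\setminus E$ are incident to $v$, where $r(v),b(v)$ are the numbers of red and blue neighbours of $v$ in $G$.
   Context: Graphs are finite, simple and undirected. A colouring $f:V\to\{B,R\}$ partitions $V$ into the blue nodes $B=f^{-1}(B)$ and red nodes $R=f^{-1}(R)$. For an edge set $E'$ on $V$ and $v\in V$, let $b_{E'}(v)$ and $r_{E'}(v)$ be the numbers of blue and red neighbours of $v$ in $(V,E')$; write $b(v)=b_E(v)$, $r(v)=r_E(v)$. A node $v$ is under (majority) illusion in $(V,E')$ if $r_{E'}(v)>b_{E'}(v)$. Standing assumption: $|B|>|R|$. An optimal solution to MIAE is an edge set $E'\supseteq E$ on $V$ such that no node is under illusion in $(V,E')$ and $|E'\setminus E|$ is minimum among all such sets. *)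

From mathcomp Require Import all_boot.
Set Implicit Arguments. Unset Strict Implicit. Unset Printing Implicit Defensive.

(* A simple graph on a finite vertex type V is given by its edge set:
   a set of unordered pairs {u,v} (2-element subsets of V). *)
Definition edge_set (V : finType) (E : {set {set V}}) : Prop :=
  forall s, s \in E -> #|s| = 2.

(* Colouring: true = Blue, false = Red. *)
Definition colouring (V : finType) := V -> bool.

Definition blue_nodes (V : finType) (f : colouring V) : {set V} := [set x | f x].
Definition red_nodes (V : finType) (f : colouring V) : {set V} := [set x | ~~ f x].

Definition nbrs (V : finType) (E : {set {set V}}) (v : V) : {set V} :=
  [set u | (u != v) && ([set u; v] \in E)].

Definition bdeg (V : finType) (f : colouring V) (E : {set {set V}}) (v : V) : nat :=
  #|[set u in nbrs E v | f u]|.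
Definition rdeg (V : finType) (f : colouring V) (E : {set {set V}}) (v : V) : nat :=
  #|[set u in nbrs E v | ~~ f u]|.

Definition under_illusion (V : finType) (f : colouring V) (E : {set {set V}}) (v : V) : Prop :=
  bdeg f E v < rdeg f E v.

Definition MIAE_feasible (V : finType) (f : colouring V) (E E' : {set {set V}}) : Prop :=
  [/\ edge_set E', E \subset E' & forall v, ~ under_illusion f E' v].

Definition MIAE_optimal (V : finType) (f : colouring V) (E E' : {set {set V}}) : Prop :=
  MIAE_feasible f E E' /\
  forall E'', MIAE_feasible f E E'' -> #|E' :\: E| <= #|E'' :\: E|.

Definition incident_count (V : finType) (F : {set {set V}}) (v : V) : nat :=
  #|[set s in F | v \in s]|.

From mathcomp Require Import all_boot zify.
Set Implicit Arguments. Unset Strict Implicit.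

(* Let D be the set of new neighbours of a red node v in an optimal E'.
   If some u in D were red, or if v had strictly more blue than red
   neighbours in E', then deleting the added edge {u, v} would keep every
   node free of illusion (v loses a red neighbour or has blue neighbours to
   spare, u loses the red neighbour v) and give a cheaper solution.  Hence D
   is all blue and, when nonempty, v is exactly balanced in E': r(v) = b(v) + |D|.
   Conversely r(v) <= b(v) + |D| because v is not under illusion in E'. *)

Section SeparationCounts.
Variables (T : finType) (p : pred T).
Implicit Types (A S : {set T}) (y : T).

Lemma sep_setD1_notin S y : ~~ p y -> [set x in S :\ y | p x] = [set x in S | p x].
Proof.
move=> npy; apply/setP=> x; rewrite !inE.
by case: (eqVneq x y) => [->|] //=; rewrite (negbTE npy) andbF.
Qed.

Lemma card_sep_setD1_le S y : #|[set x in S :\ y | p x]| <= #|[set x in S | p x]|.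
Proof. by apply: subset_leq_card; rewrite !setIdE setSI ?subD1set. Qed.

Lemma card_sep_setD1_ge S y : #|[set x in S | p x]| <= #|[set x in S :\ y | p x]|.+1.
Proof.
rewrite (cardsD1 y [set x in S | p x]).
have -> : [set x in S | p x] :\ y = [set x in S :\ y | p x].
  by apply/setP=> x; rewrite !inE andbA.
by case: (y \in _).
Qed.

Lemma card_sep_setD A0 A : A0 \subset A ->
  #|[set x in A | p x]| = #|[set x in A0 | p x]| + #|[set x in A :\: A0 | p x]|.
Proof.
move=> sA0A; rewrite -(cardsID A0 [set x in A | p x]); congr (_ + _); apply: eq_card => x.
  rewrite !inE andbC; case A0x: (x \in A0) => //=.
  by rewrite (subsetP sA0A x A0x).
by rewrite !inE andbA.
Qed.

Lemma card_sep_split S : #|S| = #|[set x in S | p x]| + #|[set x in S | ~~ p x]|.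
Proof.
rewrite -(cardsID [set x | p x] S) setIdE; congr (_ + _).
by apply: eq_card => x; rewrite !inE andbC.
Qed.

End SeparationCounts.

Section Neighbourhoods.
Variable V : finType.
Implicit Types (F G : {set {set V}}) (u v w x : V).

Lemma set2_eqE x w u v : x != w ->
  ([set x; w] == [set u; v]) = ((x == u) && (w == v)) || ((x == v) && (w == u)).
Proof.
move=> xw; apply/idP/idP => [/eqP e|].
- have : x \in [set u; v] by rewrite -e set21.
  have : w \in [set u; v] by rewrite -e set22.
  rewrite !inE => /orP[]/eqP wuv /orP[]/eqP xuv; subst;
  by rewrite ?eqxx ?orbT //; rewrite eqxx in xw.
- by case/orP=> /andP[/eqP-> /eqP->]; rewrite // setUC.
Qed.

Lemma nbrsS F G w : F \subset G -> nbrs F w \subset nbrs G w.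
Proof.
by move=> sFG; apply/subsetP=> x; rewrite !inE => /andP[-> /(subsetP sFG)].
Qed.

Lemma nbrsD F G w : nbrs (G :\: F) w = nbrs G w :\: nbrs F w.
Proof. by apply/setP=> x; rewrite !inE; case: (x != w). Qed.

Lemma nbrsD1_edge F u v w : u != v ->
  nbrs (F :\ [set u; v]) w =
  if w == v then nbrs F w :\ u else if w == u then nbrs F w :\ v else nbrs F w.
Proof.
move=> uv; apply/setP=> x; rewrite !inE.
have [->|xw] /= := eqVneq x w.
  by case: ifP => _; [|case: ifP => _]; rewrite !inE eqxx ?andbF.
rewrite set2_eqE //.
have [wv|wv] := eqVneq w v.
  by subst w; rewrite !inE (negbTE xw) /= ?andbT ?andbF ?orbF.
have [wu|wu] := eqVneq w u.
  by subst w; rewrite !inE (negbTE xw) /= ?andbT ?andbF ?orbF.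
by rewrite !andbF !inE xw.
Qed.

Lemma incident_countE F w : edge_set F -> incident_count F w = #|nbrs F w|.
Proof.
move=> edgeF; rewrite /incident_count.
have -> : [set s in F | w \in s] = [set [set y; w] | y in nbrs F w].
  apply/setP=> s; rewrite inE; apply/andP/imsetP => [[sF ws]|[y]].
  - have /cards2P [a [b [ab es]]] : #|s| == 2 by rewrite (edgeF s sF).
    move: ws sF; rewrite es !inE => /orP[]/eqP-> sF.
      by exists b; rewrite 1?setUC // inE eq_sym ab setUC.
    by exists a; rewrite // inE ab.
  - by rewrite inE => /andP[_ yw] ->; rewrite yw set22.
rewrite card_in_imset // => a b; rewrite !inE => /andP[aw _] /andP[bw _] e.
have : a \in [set b; w] by rewrite -e set21.
by rewrite !inE (negbTE aw) orbF => /eqP.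
Qed.

End Neighbourhoods.

Section IllusionAfterEdgeDeletion.
Variables (V : finType) (f : colouring V).
Implicit Types (E F : {set {set V}}) (S : {set V}) (u v w : V).

Lemma not_under_illusionE F w : ~ under_illusion f F w <-> rdeg f F w <= bdeg f F w.
Proof. by rewrite /under_illusion ltnNge; split=> [/negP/negPn|-> //]. Qed.

Lemma balanced_setD1_red S y :
  #|[set x in S | ~~ f x]| <= #|[set x in S | f x]| -> ~~ f y ->
  #|[set x in S :\ y | ~~ f x]| <= #|[set x in S :\ y | f x]|.
Proof.
move=> bal fy; rewrite (sep_setD1_notin _ fy).
exact: leq_trans (card_sep_setD1_le _ _ _) bal.
Qed.

Lemma balanced_setD1 S y :
  #|[set x in S | ~~ f x]| < #|[set x in S | f x]| ->
  #|[set x in S :\ y | ~~ f x]| <= #|[set x in S :\ y | f x]|.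
Proof.
move=> bal; have := card_sep_setD1_ge f S y.
have := card_sep_setD1_le (fun x => ~~ f x) S y; lia.
Qed.

Lemma feasible_setD1_edge E E' u v :
  MIAE_feasible f E E' -> u != v -> [set u; v] \in E' :\: E -> ~~ f v ->
  ~~ f u || (rdeg f E' v < bdeg f E' v) ->
  MIAE_feasible f E (E' :\ [set u; v]).
Proof.
move=> [edgeE' sEE' balE'] uv; rewrite inE => /andP[uvNE uvE'] fv spare.
split.
- by move=> s; rewrite inE => /andP[_ /edgeE'].
- apply/subsetP=> s sE; rewrite in_setD1 (subsetP sEE' _ sE) andbT.
  by apply: contraNneq uvNE => <-.
- move=> w; apply/not_under_illusionE; have /not_under_illusionE := balE' w.
  rewrite /rdeg /bdeg nbrsD1_edge //.
  have [-> bal|_] := eqVneq w v.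
    by case/orP: spare => [/(balanced_setD1_red bal) | /balanced_setD1].
  by have [_ bal|_ //] := eqVneq w u; apply: balanced_setD1_red bal fv.
Qed.

Lemma bdeg_subset E E' w : E \subset E' ->
  bdeg f E' w = bdeg f E w + #|[set x in nbrs E' w :\: nbrs E w | f x]|.
Proof. by move=> sEE'; apply/card_sep_setD/nbrsS. Qed.

Lemma rdeg_subset E E' w : E \subset E' ->
  rdeg f E' w = rdeg f E w + #|[set x in nbrs E' w :\: nbrs E w | ~~ f x]|.
Proof. by move=> sEE'; apply/card_sep_setD/nbrsS. Qed.

Lemma optimal_added_nbr_blue_tight E E' v u :
  MIAE_optimal f E E' -> ~~ f v -> u \in nbrs E' v :\: nbrs E v ->
  f u && (bdeg f E' v <= rdeg f E' v).
Proof.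
move=> [feasE' minE'] fv; rewrite -nbrsD inE => /andP[uv uvNew].
apply/negPn/negP; rewrite negb_and -ltnNge => spare.
have := minE' _ (feasible_setD1_edge feasE' uv uvNew fv spare).
have -> : (E' :\ [set u; v]) :\: E = (E' :\: E) :\ [set u; v].
  by apply/setP=> s; rewrite !inE andbCA.
by rewrite (cardsD1 [set u; v] (E' :\: E)) uvNew ltnn.
Qed.

End IllusionAfterEdgeDeletion.

Theorem mainTheorem3 (V : finType) (E : {set {set V}}) (f : colouring V)
  (E' : {set {set V}}) :
  edge_set E ->
  #|red_nodes f| < #|blue_nodes f| ->
  MIAE_optimal f E E' ->
  forall v, ~~ f v ->
    incident_count (E' :\: E) v = maxn (rdeg f E v - bdeg f E v) 0.
Proof.
move=> _ _ optE' v fv; have [[edgeE' sEE' balE'] _] := optE'.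
have edgeNew : edge_set (E' :\: E) by move=> s /setDP[/edgeE'].
rewrite maxn0 incident_countE // nbrsD.
have bE' := bdeg_subset f v sEE'; have rE' := rdeg_subset f v sEE'.
set D := nbrs E' v :\: nbrs E v in bE' rE' *.
have cardD := card_sep_split f D.
have /not_under_illusionE bal := balE' v.
apply/eqP; rewrite eqn_leq andbC; apply/andP; split; first by lia.
have [->|[u uD]] := set_0Vmem D; first by rewrite cards0.
have redD0 : #|[set x in D | ~~ f x]| = 0.
  apply: eq_card0 => x; rewrite inE; apply/negP => /andP[xD].
  by case/andP: (optimal_added_nbr_blue_tight optE' fv xD) => ->.
have /andP[_ tight] := optimal_added_nbr_blue_tight optE' fv uD; lia.
Qed.
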